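(* There is a universal constant $c$ (one can take $c=2$) such that for all $d\ge2$, $n\ge1$ and every linear operator $O$ on $(\mathbb{C}^d)^{\otimes n}$ with $\|O\|_2=1$, $$H[O]\le c\,[\log n+\log d]\,I[O]+h(P_O[\vec 0]),$$ where $h(x)=-x\log x-(1-x)\log(1-x)$ is the binary entropy and logarithms are base 2.
   Context: Let $V=\mathbb{Z}_d\times\mathbb{Z}_d$; for $a=(s,t)\in V$, $P_a=X^sZ^t$ with $X|j\rangle=|j+1\bmod d\rangle$, $Z|j\rangle=e^{2\pi ij/d}|j\rangle$; for $\vec a\in V^n$, $P_{\vec a}=\bigotimes_iP_{a_i}$ and $|\vec a|$ is the number of $i$ with $a_i\ne(0,0)$. $\|A\|_2=(d^{-n}\mathrm{Tr}(A^\dagger A))^{1/2}$. For $\|O\|_2=1$, $P_O[\vec a]=d^{-2n}|\mathrm{Tr}(OP_{\vec a})|^2$ is a probability distribution on $V^n$; $\vec 0$ is the all-$(0,0)$ vector. The quantum Fourier entropy is $H[O]=-\sum_{\vec a}P_O[\vec a]\log P_O[\vec a]$ and the total influence is $I[O]=\sum_{\vec a}|\vec a|P_O[\vec a]$. *)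

From HB Require Import structures.
From mathcomp Require Import all_boot all_order all_algebra.
From mathcomp Require Import reals exp trigo.
From mathcomp Require Import complex.
Set Implicit Arguments. Unset Strict Implicit. Unset Printing Implicit Defensive.
Import Order.TTheory GRing.Theory Num.Theory.
Local Open Scope ring_scope.

Section Defs.
Variable R : realType.
Variables d n : nat.

(* Computational basis of (C^d)^{(x) n}: strings j = (j_1,...,j_n), j_i in Z_d. *)
Definition basis := {ffun 'I_n -> 'I_d}.

(* A linear operator on (C^d)^{(x) n}, given by its matrix
   O x y = <x| O |y> in the computational basis. *)
Definition op := basis -> basis -> R[i].

Definition pvec := {ffun 'I_n -> 'I_d * 'I_d}.

Definition omega : R[i] :=
  Complex (cos (2 * pi / d%:R)) (sin (2 * pi / d%:R)).

(* matrix entry <j| X^s Z^t |k> = [j = k + s mod d] * omega^(t k),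
   since X^s Z^t |k> = e^{2 pi i t k/d} |k + s mod d>. *)
Definition pauli1 (a : 'I_d * 'I_d) (j k : 'I_d) : R[i] :=
  if (j : nat) == ((k + a.1) %% d)%N then omega ^+ (a.2 * k) else 0.

(* P_a = (x)_i P_{a_i}, entries of a tensor product are products of entries *)
Definition pauli (a : pvec) : op :=
  fun x y => \prod_(i < n) pauli1 (a i) (x i) (y i).

Definition trace (A : op) : R[i] := \sum_(x : basis) A x x.
Definition opmul (A B : op) : op := fun x y => \sum_(z : basis) A x z * B z y.
Definition adj (A : op) : op := fun x y => conjc (A y x).

Definition sqmod (z : R[i]) : R := complex.Re z ^+ 2 + complex.Im z ^+ 2.

(* ||A||_2 = (d^{-n} Tr(A^dagger A))^{1/2}  (Tr(A^dagger A) is real >= 0) *)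
Definition norm2 (A : op) : R :=
  Num.sqrt (complex.Re (trace (opmul (adj A) A)) / (d ^ n)%:R).

Definition PO (O : op) (a : pvec) : R :=
  sqmod (trace (opmul O (pauli a))) / ((d ^ n) ^ 2)%:R.

Definition log2 (x : R) : R := ln x / ln 2.

Definition xlog2x (x : R) : R := if x == 0 then 0 else x * log2 x.

Definition weight (a : pvec) : nat :=
  #|[set i : 'I_n | ((a i).1 != 0 :> nat) || ((a i).2 != 0 :> nat)]|.

Definition fourier_entropy (O : op) : R := - \sum_(a : pvec) xlog2x (PO O a).

Definition total_influence (O : op) : R := \sum_(a : pvec) (weight a)%:R * PO O a.

(* the all-(0,0) vector of V^n (needs d > 0 to name 0 in Z_d) *)
Definition zero_vec (Hd : (0 < d)%N) : pvec :=
  [ffun=> (Ordinal Hd, Ordinal Hd)].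

End Defs.

Definition binary_entropy (R : realType) (x : R) : R :=
  - xlog2x x - xlog2x (1 - x).

(* Write P for the distribution P_O.  The Pauli operators satisfy the
   completeness relation  sum_a P_a[z,x] conj(P_a[z',x']) = d^n [z=z'][x=x'],
   which gives Parseval's identity and makes P a probability distribution.
   Compare P with the weights q(a) = (nd)^(-2|a|): q(0) = 1 and
   sum_a q(a) = (1 + (d^2-1)/(nd)^2)^n <= (1 + 1/n^2)^n <= 2, so Gibbs'
   inequality for P restricted to a <> 0 (a sub-distribution of mass 1 - P(0)
   against weights of mass at most 1) yields
   H[P] <= sum_a P(a) log(1/q(a)) + h(P(0)) = 2 log(nd) I[O] + h(P(0)). *)

From HB Require Import structures.
From mathcomp Require Import all_boot all_order all_algebra.
From mathcomp Require Import reals exp trigo.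
From mathcomp Require Import complex.
From mathcomp Require Import ring lra.
Import Order.TTheory GRing.Theory Num.Theory.
Set Implicit Arguments. Unset Strict Implicit.
Local Open Scope complex_scope.
Local Open Scope ring_scope.

Section Gibbs.
Variable R : realType.

Lemma ln_le_subr1 (x : R) : 0 < x -> ln x <= x - 1.
Proof. by move=> x0; rewrite -[x in ln x](subrKC 1) le_ln1Dx // ltrBrDl subrr. Qed.

Lemma neg_xlnx_le (p s q : R) : 0 <= p <= s -> 0 < q ->
  - (p * ln p) <= - (p * ln s) - p * ln q + (s * q - p).
Proof.
case/andP=> p0 ps q0; have [->|pn0] := eqVneq p 0.
  by rewrite !mul0r !(oppr0, add0r, addr0) mulr_ge0 ?(le_trans p0 ps) ?ltW.
have p_gt0 : 0 < p by rewrite lt_def pn0.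
have s_gt0 : 0 < s := lt_le_trans p_gt0 ps.
have := @ln_le_subr1 _ (divr_gt0 (mulr_gt0 s_gt0 q0) p_gt0).
rewrite ln_div ?lnM ?posrE ?mulr_gt0 // => /(ler_wpM2l p0).
have -> : p * (s * q / p - 1) = s * q - p by field; rewrite gt_eqF.
lra.
Qed.

Lemma gibbs_le (I : finType) (A : {pred I}) (P q : I -> R) :
  (forall a, 0 <= P a) -> (forall a, 0 < q a) -> \sum_(a in A) q a <= 1 ->
  - \sum_(a in A) P a * ln (P a) <=
    - \sum_(a in A) P a * ln (q a) - (\sum_(a in A) P a) * ln (\sum_(a in A) P a).
Proof.
move=> P0 q0 qA; set S := \sum_(a in A) P a.
have PS a : a \in A -> 0 <= P a <= S.
  move=> aA; rewrite P0 /S (bigD1 a) //= lerDl sumr_ge0 // => i _; exact: P0.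
have : \sum_(a in A) - (P a * ln (P a)) <=
       \sum_(a in A) (- (P a * ln S) - P a * ln (q a) + (S * q a - P a)).
  by apply: ler_sum => a aA; apply: neg_xlnx_le; rewrite ?PS.
rewrite sumrN !big_split /= !sumrN -mulr_suml -mulr_sumr -/S.
have : S * \sum_(a in A) q a <= S.
  by rewrite -[leRHS]mulr1 ler_wpM2l // sumr_ge0.
lra.
Qed.

Lemma entropy_le_cross_binary (I : finType) (P q : I -> R) (x0 : I) :
  (forall a, 0 <= P a) -> \sum_a P a = 1 ->
  (forall a, 0 < q a) -> q x0 = 1 -> \sum_a q a <= 2 ->
  - \sum_a P a * ln (P a) <=
    - \sum_a P a * ln (q a) - P x0 * ln (P x0) - (1 - P x0) * ln (1 - P x0).
Proof.
move=> P0 P1 q0 qx0 q2.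
have rest : \sum_(a in predC1 x0) P a = 1 - P x0.
  by rewrite -P1 [in RHS](bigD1 x0) //= addrC addrK.
have qrest : \sum_(a in predC1 x0) q a <= 1.
  by move: q2; rewrite (bigD1 x0) //= qx0; lra.
have := gibbs_le P0 q0 qrest; rewrite /= rest.
have split_x0 (F : I -> R) : \sum_a F a = F x0 + \sum_(a in predC1 x0) F a.
  exact: bigD1.
by rewrite !split_x0 qx0 ln1 mulr0 add0r; lra.
Qed.

End Gibbs.

Section Counting.
Variable R : realType.

Lemma expr1D_le (e : R) (m : nat) : 0 <= e -> 2 * m%:R * e <= 1 ->
  (1 + e) ^+ m <= 1 + 2 * m%:R * e.
Proof.
move=> e0; elim: m => [|m IH]; first by rewrite expr0 mulr0 mul0r addr0.
rewrite -natr1 exprS => me1.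
have {}IH : (1 + e) ^+ m <= 1 + 2 * m%:R * e by apply: IH; nra.
have : (1 + e) * (1 + e) ^+ m <= (1 + e) * (1 + 2 * m%:R * e).
  by rewrite ler_wpM2l // addr_ge0.
have : 0 <= m%:R :> R := ler0n _ m.
nra.
Qed.

Lemma expr1D_invn2_le2 (n : nat) : (0 < n)%N -> (1 + (n%:R ^+ 2)^-1) ^+ n <= 2 :> R.
Proof.
case: n => [//|[_|n _]]; first by rewrite expr1n invr1 expr1; lra.
set k : R := n.+2%:R; have k2 : 2 <= k by rewrite (ler_nat R 2).
have k0 : 0 < k by apply: lt_le_trans k2.
have E : 2 * k * (k ^+ 2)^-1 = 2 / k by rewrite expr2 invfM mulrA mulfK ?gt_eqF.
have : 2 / k <= 1 by rewrite ler_pdivrMr ?mul1r.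
move=> h; apply: le_trans (expr1D_le _ _) _; rewrite ?E ?invr_ge0 ?exprn_ge0 //.
clearbody k; lra.
Qed.
End Counting.

Section Weight.
Variables (R : realType) (p n : nat).
Local Notation d := p.+1.

Lemma weightE (a : pvec d n) :
  weight a = #|[set i | a i != (0, 0)]|.
Proof.
by apply: eq_card => i; rewrite !inE; case: (a i) => s t; rewrite xpair_eqE negb_and.
Qed.

Lemma sum_expr_weight (r : R) :
  \sum_(a : pvec d n) r ^+ weight a = (1 + (d ^ 2).-1%:R * r) ^+ n.
Proof.
have site : \sum_(v : 'I_d * 'I_d) (if v != (0, 0) then r else 1)
    = 1 + (d ^ 2).-1%:R * r.
  rewrite (bigD1 (0, 0)) //=; congr (_ + _).
  rewrite (eq_bigr (fun _ => r)) => [|v /negbTE -> //].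
  by rewrite sumr_const cardC1 card_prod card_ord mulr_natl.
have -> : (1 + (d ^ 2).-1%:R * r) ^+ n = \prod_(i < n) (1 + (d ^ 2).-1%:R * r).
  by rewrite prodr_const card_ord.
rewrite -(eq_bigr _ (fun i _ => site)) bigA_distr_bigA /=.
apply: eq_bigr => a _; rewrite weightE -prodr_const big_mkcond /=.
by apply: eq_bigr => i _; rewrite inE.
Qed.

Lemma weight_zero_vec (Hd : (0 < d)%N) : weight (@zero_vec d n Hd) = 0%N.
Proof. by apply: eq_card0 => i; rewrite !inE ffunE. Qed.

Lemma sum_weight_le2 : (0 < n)%N ->
  \sum_(a : pvec d n) ((n%:R * d%:R) ^+ 2)^-1 ^+ weight a <= 2 :> R.
Proof.
move=> n0; rewrite sum_expr_weight; apply: le_trans (expr1D_invn2_le2 R n0).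
have nd0 : 0 < n%:R * d%:R :> R by rewrite mulr_gt0 ?ltr0n.
have r0 : 0 <= ((n%:R * d%:R) ^+ 2)^-1 :> R by rewrite invr_ge0 exprn_ge0 // ltW.
have n0' : 0 <= (n%:R ^+ 2)^-1 :> R by rewrite invr_ge0 exprn_ge0.
apply: lerXn2r; rewrite ?nnegrE ?addr_ge0 ?mulr_ge0 // lerD2l.
rewrite exprMn invfM mulrCA ger_pMr ?invr_gt0 ?exprn_gt0 ?ltr0n //.
by rewrite ler_pdivrMr ?exprn_gt0 ?ltr0n // mul1r -natrX ler_nat leq_pred.
Qed.
End Weight.

Lemma xlog2xE (R : realType) (x : R) : xlog2x x = x * ln x / ln 2.
Proof. by rewrite /xlog2x /log2; case: eqP => [->|_]; rewrite ?mul0r ?mulrA. Qed.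

Lemma sum_unity_root_expr (F : idomainType) (n : nat) (z : F) :
  z ^+ n = 1 -> z != 1 -> \sum_(t < n) z ^+ t = 0.
Proof.
move=> zn z1; apply/eqP; have := subrX1 z n.
by rewrite zn subrr => /esym/eqP; rewrite mulf_eq0 subr_eq0 (negbTE z1).
Qed.

Section Omega.
Variables (R : realType) (p : nat).
Local Notation d := p.+1.
Local Notation omega := (omega R d).

Lemma cos_neq1 (x : R) : 0 < x < pi *+ 2 -> cos x != 1.
Proof.
move=> x02; have : 0 < sin (x / 2) by apply: sin_gt0_pi; rewrite mulr2n in x02; lra.
have -> : cos x = cos ((x / 2) *+ 2) by rewrite -mulr_natr divfK ?pnatr_eq0.
rewrite cos_mulr2n; have := cos2Dsin2 (x / 2); nra.
Qed.

Lemma omegaX k :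
  omega ^+ k = cos (k%:R * (2 * pi / d%:R)) +i* sin (k%:R * (2 * pi / d%:R)).
Proof.
elim: k => [|k IH]; first by rewrite expr0 mul0r cos0 sin0.
rewrite exprSr IH /omega; set th := 2 * pi / d%:R.
rewrite -[k.+1]addn1 natrD mulrDl mul1r cosD sinD; simpc.
by rewrite [_ * sin th + _]addrC.
Qed.

Lemma omega_expr_order : omega ^+ d = 1.
Proof.
rewrite omegaX (_ : d%:R * _ = pi *+ 2) ?cos2pi ?sin2pi //.
by rewrite mulr2n; field; rewrite addrC natr1 pnatr_eq0.
Qed.

Lemma omega_expr_neq1 k : (0 < k < d)%N -> omega ^+ k != 1.
Proof.
case/andP=> k0 kd; rewrite omegaX.
have kd1 : 0 < (k%:R / d%:R : R) < 1.
  by rewrite divr_gt0 ?ltr0n //= ltr_pdivrMr ?mul1r ?ltr0n ?ltr_nat.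
have := @pi_gt0 R; rewrite mulrCA mulrA -mulrA => pi0.
apply: contra _ (@cos_neq1 (2 * pi * (k%:R / d%:R)) _); first by move/eqP=> [-> _].
move: (k%:R / d%:R) kd1 => t /andP[t0 t1].
by rewrite -[pi *+ 2]mulr_natl; apply/andP; split; nra.
Qed.

Lemma omega_prim : d.-primitive_root omega.
Proof.
apply/andP; split=> //; apply/forallP=> i; rewrite unity_rootE.
have [id|nd] := eqVneq i.+1 d; first by rewrite id omega_expr_order !eqxx.
have : (0 < i.+1 < d)%N by rewrite ltn0Sn ltn_neqAle nd ltn_ord.
by move=> /omega_expr_neq1/negbTE->.
Qed.

Lemma omega_mulJ : omega * omega^*%C = 1.
Proof. by rewrite /omega; simpc; rewrite -!expr2 cos2Dsin2 mulrC addNr. Qed.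

Lemma sum_omega_char (k k' : 'I_d) :
  \sum_(t < d) omega ^+ (t * k) * (omega ^+ (t * k'))^*%C = (k == k')%:R * d%:R.
Proof.
set z := omega ^+ k * omega^*%C ^+ k'.
have zE t : omega ^+ (t * k) * (omega ^+ (t * k'))^*%C = z ^+ t.
  by rewrite rmorphXn /= exprMn -!exprM !(mulnC t).
under eq_bigr do rewrite zE.
have [kk|kk'] := eqVneq k k'.
  rewrite /z -kk -exprMn omega_mulJ expr1n.
  by under eq_bigr do rewrite expr1n; rewrite sumr_const card_ord mul1r.
rewrite mul0r; apply: sum_unity_root_expr.
  by rewrite /z exprMn !(exprAC _ _ d) -rmorphXn omega_expr_order rmorph1 !expr1n mulr1.
apply: contra kk' => /eqP z1.
have : omega ^+ k = omega ^+ k'.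
  by rewrite -[LHS]mulr1 -(expr1n _ k') -omega_mulJ exprMn mulrCA -/z z1 mulr1.
by move/eqP; rewrite (eq_prim_root_expr omega_prim) !modn_small.
Qed.
End Omega.

Lemma parseval (R : rcfType) (A I : finType) (f : A -> I -> R[i]) (N : R[i])
    (g : I -> R[i]) :
  (forall i j, \sum_a f a i * (f a j)^*%C = (i == j)%:R * N) ->
  \sum_a (\sum_i g i * f a i) * (\sum_i g i * f a i)^*%C =
    N * \sum_i g i * (g i)^*%C.
Proof.
move=> complete.
transitivity (\sum_i \sum_j g i * (g j)^*%C * \sum_a f a i * (f a j)^*%C).
  under eq_bigr do rewrite rmorph_sum big_distrlr /=.
  rewrite exchange_big; apply: eq_bigr => i _; rewrite exchange_big.
  apply: eq_bigr => j _; rewrite mulr_sumr; apply: eq_bigr => a _.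
  by rewrite rmorphM mulrACA.
rewrite mulr_sumr; apply: eq_bigr => i _.
rewrite (bigD1 i) //= [X in _ + X]big1 => [|j ji].
  by rewrite complete eqxx mul1r addr0 mulrC.
by rewrite complete eq_sym (negbTE ji) mul0r mulr0.
Qed.

Lemma sqmodE (R : realType) (z : R[i]) : (sqmod z)%:C = z * z^*%C.
Proof.
by case: z => a b; rewrite /sqmod; simpc; rewrite /= !expr2 [b * a]mulrC addNr.
Qed.

Lemma sqmod_ge0 (R : realType) (z : R[i]) : 0 <= sqmod z.
Proof. by rewrite addr_ge0 ?sqr_ge0. Qed.

Section Pauli.
Variables (R : realType) (p : nat).
Local Notation d := p.+1.
Local Notation omega := (omega R d).

Lemma sum_shift (j k : 'I_d) :
  \sum_(s : 'I_d) ((j : nat) == ((k + s) %% d)%N)%:R = 1 :> R[i].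
Proof.
have shiftE (s : 'I_d) : ((j : nat) == ((k + s) %% d)%N) = (s == j - k).
  (* the ring ['I_d] adds modulo [d] *)
  by rewrite -[LHS]/(j == k + s) [RHS]eq_sym subr_eq addrC.
under eq_bigr do rewrite shiftE.
by rewrite (bigD1 (j - k)) //= eqxx big1 ?addr0 // => s /negbTE ->.
Qed.

Lemma pauli1E (v : 'I_d * 'I_d) (j k : 'I_d) :
  pauli1 R v j k = ((j : nat) == ((k + v.1) %% d)%N)%:R * omega ^+ (v.2 * k).
Proof. by rewrite /pauli1; case: eqP; rewrite ?mul1r ?mul0r. Qed.

Lemma pauli1_complete (j k j' k' : 'I_d) :
  \sum_v pauli1 R v j k * (pauli1 R v j' k')^*%C =
    ((j == j') && (k == k'))%:R * d%:R.
Proof.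
rewrite -(pair_bigA _ (fun s t => pauli1 R (s, t) j k * (pauli1 R (s, t) j' k')^*%C)) /=.
under eq_bigr => s _.
  rewrite (eq_bigr (fun t : 'I_d => ((j : nat) == ((k + s) %% d)%N)%:R *
    ((j' : nat) == ((k' + s) %% d)%N)%:R * (omega ^+ (t * k) * (omega ^+ (t * k'))^*%C))).
    by rewrite -mulr_sumr sum_omega_char; over.
  by move=> t _; rewrite !pauli1E rmorphM rmorph_nat /= mulrACA.
have [<-|kk'] := eqVneq k k'; last first.
  by rewrite andbF mul0r big1 // => s _; rewrite mulr0.
rewrite mul1r -mulr_suml; congr (_ * _).
have [<-|jj'] := eqVneq j j'.
  by under eq_bigr do rewrite -natrM mulnb andbb; rewrite sum_shift.
rewrite big1 // => s _; rewrite -natrM mulnb.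
case: eqP => // hj; case: eqP => // hj'.
by case/eqP: jj'; apply: val_inj; rewrite /= hj hj'.
Qed.

Lemma pauli_complete n (z x z' x' : basis d n) :
  \sum_(a : pvec d n) pauli R a z x * (pauli R a z' x')^*%C =
  ((z == z') && (x == x'))%:R * (d ^ n)%:R.
Proof.
under eq_bigr do rewrite /pauli rmorph_prod -big_split /=.
rewrite -(bigA_distr_bigA (fun i v =>
  pauli1 R v (z i) (x i) * (pauli1 R v (z' i) (x' i))^*%C)) /=.
under eq_bigr do rewrite pauli1_complete.
rewrite big_split /= prodr_const card_ord natrX; congr (_ * _).
have [/forallP eq_zx|/forallPn[i neq_i]] :=
  boolP [forall i, (z i == z' i) && (x i == x' i)].
  have [<- <-] : z = z' /\ x = x'.
    by split; apply/ffunP=> i; have /andP[/eqP ? /eqP ?] := eq_zx i.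
  by rewrite !eqxx big1 // => i _; rewrite !eqxx.
rewrite (bigD1 i) //= (negbTE neq_i) mul0r.
case: (eqVneq z z') neq_i => [<-|_]; case: (eqVneq x x') => [<-|_] //.
by rewrite !eqxx.
Qed.

Lemma sum_sqmod_trace_pauli n (O : op R d n) :
  \sum_a sqmod (trace (opmul O (pauli R a))) =
  (d ^ n)%:R * \sum_(xz : basis d n * basis d n) sqmod (O xz.1 xz.2).
Proof.
apply: (@complexI R); rewrite rmorphM rmorph_nat !rmorph_sum /=.
under eq_bigr do rewrite sqmodE /trace /opmul pair_bigA /=.
under [in RHS]eq_bigr do rewrite sqmodE.
by apply: parseval => -[x z] [x' z']; rewrite pauli_complete xpair_eqE andbC.
Qed.

Lemma trace_adjM n (O : op R d n) :
  trace (opmul (adj O) O) =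
    (\sum_(xz : basis d n * basis d n) sqmod (O xz.1 xz.2))%:C.
Proof.
rewrite /trace /opmul /adj rmorph_sum exchange_big pair_bigA /=.
by apply: eq_bigr => -[z x] _; rewrite sqmodE mulrC.
Qed.

Lemma PO_ge0 n (O : op R d n) a : 0 <= PO O a.
Proof. by rewrite divr_ge0 ?sqmod_ge0. Qed.

Lemma sum_PO n (O : op R d n) : norm2 O = 1 -> \sum_a PO O a = 1.
Proof.
rewrite /norm2 trace_adjM /=; set S := \sum_xz _ => S1.
have dn0 : (d ^ n)%:R != 0 :> R by rewrite pnatr_eq0 expn_eq0.
have {}S1 : S / (d ^ n)%:R = 1.
  rewrite -[LHS]sqr_sqrtr ?S1 ?expr1n // divr_ge0 // sumr_ge0 // => xz _.
  exact: sqmod_ge0.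
rewrite /PO -mulr_suml sum_sqmod_trace_pauli -/S [((d ^ n) ^ 2)%:R]natrX.
by rewrite expr2 invfM mulrA [_ * S]mulrC mulfK.
Qed.
End Pauli.

Section EntropyWeight.
Variables (R : realType) (p n : nat).
Local Notation d := p.+1.

Lemma entropy_le_mean_weight (Hd : (0 < d)%N) (P : pvec d n -> R) :
  (0 < n)%N -> (forall a, 0 <= P a) -> \sum_a P a = 1 ->
  - \sum_a xlog2x (P a) <=
    2 * (log2 n%:R + log2 d%:R) * \sum_a (weight a)%:R * P a
    + binary_entropy (P (zero_vec n Hd)).
Proof.
move=> n0 P0 P1.
have nd0 : 0 < n%:R * d%:R :> R by rewrite mulr_gt0 ?ltr0n.
pose r : R := ((n%:R * d%:R) ^+ 2)^-1.
have r0 : 0 < r by rewrite invr_gt0 exprn_gt0.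
have ln_q (a : pvec d n) :
    ln (r ^+ weight a) = - (2 * (ln n%:R + ln d%:R)) * (weight a)%:R.
  by rewrite lnXn // lnV ?posrE ?exprn_gt0 // lnXn // lnM ?posrE ?ltr0n //; ring.
have cross : - \sum_a P a * ln (r ^+ weight a) =
    2 * (ln n%:R + ln d%:R) * \sum_a (weight a)%:R * P a.
  rewrite -sumrN mulr_sumr; apply: eq_bigr => a _; rewrite ln_q; ring.
have q0 : r ^+ weight (zero_vec n Hd) = 1 by rewrite weight_zero_vec.
have := entropy_le_cross_binary P0 P1 (fun a => exprn_gt0 (weight a) r0) q0
  (@sum_weight_le2 R p n n0).
rewrite cross (eq_bigr _ (fun a _ => xlog2xE (P a))) -mulr_suml.
rewrite /binary_entropy !xlog2xE /log2; set I := \sum_a _ * P a; set x0 := P _.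
have l2 : 0 < ln (2 : R) by rewrite ln_gt0 // ltr1n.
have -> : 2 * (ln n%:R / ln 2 + ln d%:R / ln 2) * I
      + (- (x0 * ln x0 / ln 2) - (1 - x0) * ln (1 - x0) / ln 2)
    = (2 * (ln n%:R + ln d%:R) * I - x0 * ln x0 - (1 - x0) * ln (1 - x0)) / ln 2.
  by field; rewrite gt_eqF.
by move=> H; rewrite -[X in X <= _]mulNr ler_pM2r // invr_gt0.
Qed.
End EntropyWeight.

Theorem mainTheorem5 :
  forall (R : realType) (d n : nat) (Hd : (2 <= d)%N), (1 <= n)%N ->
  forall O : op R d n, norm2 O = 1 ->
    fourier_entropy O <=
      2 * (log2 (n%:R : R) + log2 (d%:R : R)) * total_influence O
      + binary_entropy (PO O (@zero_vec d n (ltnW Hd))).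
Proof.
move=> R [|p] n Hd // n_gt0 O /sum_PO PO_sum1.
exact: entropy_le_mean_weight n_gt0 (@PO_ge0 R p n O) PO_sum1.
Qed.
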